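(* Let $\Psi\in\Delta_7$ be a unit spinor, $\omega^3(X,Y,Z):=-\big(X\cdot Y\cdot Z\cdot\Psi,\Psi\big)$, and fix $(p,q)\in\mathbb{R}^2$. Call a pair $(\mathrm{T},\mathrm{F})$ with $\mathrm{T}\in\Lambda^3(\mathbb{R}^7)$, $\mathrm{F}\in\Lambda^4(\mathbb{R}^7)$ admissible if for all $X\in\mathbb{R}^7$ $$\Big(X+\tfrac14\,(X\lrcorner\mathrm{T})+p\,(X\lrcorner\mathrm{F})+q\,(X\wedge\mathrm{F})\Big)\cdot\Psi=0 .$$ Among pairs of the form $\mathrm{T}=a\,\omega^3$, $\mathrm{F}=f\,( *\omega^3)$ with $a,f\in\mathbb{R}$, the admissible ones form the $1$-parameter family $$\mathrm{T}=\Big[\frac{(12q-16p)\,f}{3}-\frac43\Big]\,\omega^3,\qquad \mathrm{F}=f\,( *\omega^3),\qquad f\in\mathbb{R}.$$ In particular, if $4p-3q=0$, the torsion form does not depend on the flux form: $\mathrm{T}=-\tfrac43\,\omega^3$ and $\mathrm{F}=f\,( *\omega^3)$.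
   Context: $\mathbb{R}^7$ carries the Euclidean metric; $\Delta_7$ is the real $8$-dimensional spin representation with $\mathrm{Spin}(7)$-invariant inner product $(\cdot,\cdot)$; Clifford multiplication satisfies $X\cdot X=-|X|^2$ and $k$-forms act by Clifford multiplication ($e_{i_1}\wedge\cdots\wedge e_{i_k}\mapsto e_{i_1}\cdots e_{i_k}$, distinct indices, orthonormal basis). One has $\omega^3\cdot\Psi=-7\Psi$. $*$ is the Hodge star for the orientation fixed by the realization of the spin representation, for which $( *\omega^3)\cdot\Psi=-7\Psi$. *)

From HB Require Import structures.
From mathcomp Require Import all_boot all_order all_algebra.
Set Implicit Arguments. Unset Strict Implicit. Unset Printing Implicit Defensive.
Import Order.TTheory GRing.Theory Num.Theory.
Local Open Scope ring_scope.

(* Real 8-dim spin representation Delta_7 = R^8 (column vectors): the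
   generator e_k of R^7 (k = 0..6, i.e. e_1..e_7) acts by the matrix
   gamma k, which is left multiplication by the imaginary octonion unit
   e_{k+1} (Fano triples (124)(235)(346)(457)(561)(672)(713)).  These are
   skew-symmetric with gamma_i gamma_j + gamma_j gamma_i = -2 delta_ij, so
   the standard dot product on R^8 is Spin(7)-invariant. *)
Definition gamma_tab : seq (seq (seq int)) :=
[:: [:: [:: 0; -1; 0; 0; 0; 0; 0; 0]; [:: 1; 0; 0; 0; 0; 0; 0; 0]; [:: 0; 0; 0; 0; -1; 0; 0; 0]; [:: 0; 0; 0; 0; 0; 0; 0; -1]; [:: 0; 0; 1; 0; 0; 0; 0; 0]; [:: 0; 0; 0; 0; 0; 0; -1; 0]; [:: 0; 0; 0; 0; 0; 1; 0; 0]; [:: 0; 0; 0; 1; 0; 0; 0; 0]];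
  [:: [:: 0; 0; -1; 0; 0; 0; 0; 0]; [:: 0; 0; 0; 0; 1; 0; 0; 0]; [:: 1; 0; 0; 0; 0; 0; 0; 0]; [:: 0; 0; 0; 0; 0; -1; 0; 0]; [:: 0; -1; 0; 0; 0; 0; 0; 0]; [:: 0; 0; 0; 1; 0; 0; 0; 0]; [:: 0; 0; 0; 0; 0; 0; 0; -1]; [:: 0; 0; 0; 0; 0; 0; 1; 0]];
  [:: [:: 0; 0; 0; -1; 0; 0; 0; 0]; [:: 0; 0; 0; 0; 0; 0; 0; 1]; [:: 0; 0; 0; 0; 0; 1; 0; 0]; [:: 1; 0; 0; 0; 0; 0; 0; 0]; [:: 0; 0; 0; 0; 0; 0; -1; 0]; [:: 0; 0; -1; 0; 0; 0; 0; 0]; [:: 0; 0; 0; 0; 1; 0; 0; 0]; [:: 0; -1; 0; 0; 0; 0; 0; 0]];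
  [:: [:: 0; 0; 0; 0; -1; 0; 0; 0]; [:: 0; 0; -1; 0; 0; 0; 0; 0]; [:: 0; 1; 0; 0; 0; 0; 0; 0]; [:: 0; 0; 0; 0; 0; 0; 1; 0]; [:: 1; 0; 0; 0; 0; 0; 0; 0]; [:: 0; 0; 0; 0; 0; 0; 0; -1]; [:: 0; 0; 0; -1; 0; 0; 0; 0]; [:: 0; 0; 0; 0; 0; 1; 0; 0]];
  [:: [:: 0; 0; 0; 0; 0; -1; 0; 0]; [:: 0; 0; 0; 0; 0; 0; 1; 0]; [:: 0; 0; 0; -1; 0; 0; 0; 0]; [:: 0; 0; 1; 0; 0; 0; 0; 0]; [:: 0; 0; 0; 0; 0; 0; 0; 1]; [:: 1; 0; 0; 0; 0; 0; 0; 0]; [:: 0; -1; 0; 0; 0; 0; 0; 0]; [:: 0; 0; 0; 0; -1; 0; 0; 0]];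
  [:: [:: 0; 0; 0; 0; 0; 0; -1; 0]; [:: 0; 0; 0; 0; 0; -1; 0; 0]; [:: 0; 0; 0; 0; 0; 0; 0; 1]; [:: 0; 0; 0; 0; -1; 0; 0; 0]; [:: 0; 0; 0; 1; 0; 0; 0; 0]; [:: 0; 1; 0; 0; 0; 0; 0; 0]; [:: 1; 0; 0; 0; 0; 0; 0; 0]; [:: 0; 0; -1; 0; 0; 0; 0; 0]];
  [:: [:: 0; 0; 0; 0; 0; 0; 0; -1]; [:: 0; 0; 0; -1; 0; 0; 0; 0]; [:: 0; 0; 0; 0; 0; 0; -1; 0]; [:: 0; 1; 0; 0; 0; 0; 0; 0]; [:: 0; 0; 0; 0; 0; -1; 0; 0]; [:: 0; 0; 0; 0; 1; 0; 0; 0]; [:: 0; 0; 1; 0; 0; 0; 0; 0]; [:: 1; 0; 0; 0; 0; 0; 0; 0]]]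
.

Section Defs.
Variable R : realFieldType.

Definition gamma (k : 'I_7) : 'M[R]_8 :=
  \matrix_(i < 8, j < 8) (nth 0 (nth [::] (nth [::] gamma_tab k) i) j)%:~R.

Definition spinor := 'cV[R]_8.

Definition sp (u v : spinor) : R := \sum_(l < 8) u l 0 * v l 0.

Definition vec7 := 'I_7 -> R.
(* k-forms, given by their (alternating) components on basis vectors:
   form_k w i1 .. ik = w(e_i1, ..., e_ik). *)
Definition form2 := 'I_7 -> 'I_7 -> R.
Definition form3 := 'I_7 -> 'I_7 -> 'I_7 -> R.
Definition form4 := 'I_7 -> 'I_7 -> 'I_7 -> 'I_7 -> R.
Definition form5 := 'I_7 -> 'I_7 -> 'I_7 -> 'I_7 -> 'I_7 -> R.

Definition clif1 (X : vec7) : 'M[R]_8 := \sum_(i < 7) X i *: gamma i.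
Definition clif2 (w : form2) : 'M[R]_8 :=
  \sum_(i < 7) \sum_(j < 7 | (i < j)%N) w i j *: (gamma i *m gamma j).
Definition clif3 (w : form3) : 'M[R]_8 :=
  \sum_(i < 7) \sum_(j < 7 | (i < j)%N) \sum_(k < 7 | (j < k)%N)
     w i j k *: (gamma i *m gamma j *m gamma k).
Definition clif4 (w : form4) : 'M[R]_8 :=
  \sum_(i < 7) \sum_(j < 7 | (i < j)%N) \sum_(k < 7 | (j < k)%N) \sum_(l < 7 | (k < l)%N)
     w i j k l *: (gamma i *m gamma j *m gamma k *m gamma l).
Definition clif5 (w : form5) : 'M[R]_8 :=
  \sum_(i < 7) \sum_(j < 7 | (i < j)%N) \sum_(k < 7 | (j < k)%N) \sum_(l < 7 | (k < l)%N)
  \sum_(m < 7 | (l < m)%N)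
     w i j k l m *: (gamma i *m gamma j *m gamma k *m gamma l *m gamma m).

Definition ctr3 (X : vec7) (T : form3) : form2 :=
  fun j k => \sum_(i < 7) X i * T i j k.
Definition ctr4 (X : vec7) (F : form4) : form3 :=
  fun j k l => \sum_(i < 7) X i * F i j k l.
Definition wedge14 (X : vec7) (F : form4) : form5 :=
  fun a b c d e => X a * F b c d e - X b * F a c d e + X c * F a b d e
                   - X d * F a b c e + X e * F a b c d.

Definition omega3 (Psi : spinor) : form3 :=
  fun i j k => - sp (gamma i *m gamma j *m gamma k *m Psi) Psi.

Definition ninv (s : seq nat) : nat :=
  \sum_(i < size s) \sum_(j < size s | (i < j)%N) (nth 0%N s j < nth 0%N s i)%N.
Definition levi (s : seq 'I_7) : R :=
  if uniq s then (-1) ^+ ninv (map val s) else 0.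

(* Orientation fixed by the realization: volume form = - e_1/\...^e_7
   (equivalently, e_1...e_7 acts as -Id and then the convention
   ( *omega^3).Psi = -7 Psi holds). *)
Definition orient : R := -1.
Definition hodge3 (T : form3) : form4 :=
  fun i j k l => orient *
    \sum_(a < 7) \sum_(b < 7 | (a < b)%N) \sum_(c < 7 | (b < c)%N)
       T a b c * levi [:: a; b; c; i; j; k; l].

Definition admissible (p q : R) (Psi : spinor) (T : form3) (F : form4) : Prop :=
  forall X : vec7,
    (clif1 X + (1/4) *: clif2 (ctr3 X T) + p *: clif3 (ctr4 X F)
       + q *: clif5 (wedge14 X F)) *m Psi = 0.

End Defs.

From HB Require Import structures.
From mathcomp Require Import all_boot all_order all_algebra ring.
From Stdlib Require Import FunctionalExtensionality.
Set Implicit Arguments. Unset Strict Implicit. Unset Printing Implicit Defensive.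
Import Order.TTheory GRing.Theory Num.Theory.
Local Open Scope ring_scope.

(* In coordinates, e_k acts on Delta_7 = R^8 by left multiplication with an
   imaginary octonion unit, and for T = omega^3, F = *omega^3 each Clifford
   term of the admissibility equation is a multiple of X.Psi:
     (X _| omega^3).Psi = 3 |Psi|^2 X.Psi,   (X _| *omega^3).Psi = 4 |Psi|^2 X.Psi,
     (X /\ *omega^3).Psi = -3 |Psi|^2 X.Psi.
   These are cubic polynomial identities in the coordinates of Psi, checked by
   expansion.  The equation thus reads (1 + 3a/4 + 4pf - 3qf) X.Psi = 0, and
   e_1.Psi <> 0 since Clifford multiplication by e_1 is an isometry; so
   admissibility is one linear equation in a and f. *)

Fixpoint inversions (s : seq nat) : nat :=
  if s is x :: s' then (count (ltn^~ x) s' + inversions s')%N else 0%N.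

Lemma ninv_inversions (s : seq nat) : ninv s = inversions s.
Proof.
rewrite /ninv; elim: s => [|x s IHs] /=; first by rewrite big_ord0.
rewrite big_ord_recl -IHs; congr (_ + _)%N.
- rewrite big_mkcond big_ord_recl /= add0n -sum1_count (big_nth 0%N) big_mkord.
  by rewrite [RHS]big_mkcond; apply: eq_bigr => j _; case: ltnP.
- apply: eq_bigr => i _; rewrite big_mkcond big_ord_recl /= add0n [RHS]big_mkcond.
  by apply: eq_bigr => j _; rewrite /bump !add1n ltnS !add0n.
Qed.

Notation ord7 k := (@Ordinal 7 k isT).
Notation ord8 k := (@Ordinal 8 k isT).

Lemma index_enum_ord7 :
  index_enum 'I_7 = [:: ord7 0; ord7 1; ord7 2; ord7 3; ord7 4; ord7 5; ord7 6].
Proof. by apply: (inj_map val_inj); rewrite [index_enum _]unlock -enumT val_enum_ord. Qed.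

Lemma index_enum_ord8 : index_enum 'I_8 =
  [:: ord8 0; ord8 1; ord8 2; ord8 3; ord8 4; ord8 5; ord8 6; ord8 7].
Proof. by apply: (inj_map val_inj); rewrite [index_enum _]unlock -enumT val_enum_ord. Qed.

Section Coordinates.
Variable R : realFieldType.

Definition col8 (s : seq R) : spinor R := \col_(r < 8) s`_r.

Lemma spinor_col8 (Psi : spinor R) : exists s, Psi = col8 s.
Proof.
exists [seq Psi r 0 | r : 'I_8]; apply/matrixP => r c.
by rewrite [c]ord1 mxE (nth_map ord0) ?size_enum_ord // nth_ord_enum.
Qed.

Definition gamma_seq (k : nat) (s : seq R) : seq R :=
  match k with
  | 0 => [:: - s`_1; s`_0; - s`_4; - s`_7; s`_2; - s`_6; s`_5; s`_3]
  | 1 => [:: - s`_2; s`_4; s`_0; - s`_5; - s`_1; s`_3; - s`_7; s`_6]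
  | 2 => [:: - s`_3; s`_7; s`_5; s`_0; - s`_6; - s`_2; s`_4; - s`_1]
  | 3 => [:: - s`_4; - s`_2; s`_1; s`_6; s`_0; - s`_7; - s`_3; s`_5]
  | 4 => [:: - s`_5; s`_6; - s`_3; s`_2; s`_7; s`_0; - s`_1; - s`_4]
  | 5 => [:: - s`_6; - s`_5; s`_7; - s`_4; s`_3; s`_1; s`_0; - s`_2]
  | _ => [:: - s`_7; - s`_3; - s`_6; s`_1; - s`_5; s`_4; s`_2; s`_0]
  end.

Lemma gamma_col8 (k : 'I_7) (s : seq R) : gamma R k *m col8 s = col8 (gamma_seq k s).
Proof.
apply/matrixP => r c; rewrite !mxE bigop.unlock index_enum_ord8 /= !mxE /=.
case: k => [[|[|[|[|[|[|[|//]]]]]]] Hk];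
  case: r => [[|[|[|[|[|[|[|[|//]]]]]]]] Hr] /=; ring.
Qed.

Definition dot8 (s t : seq R) : R :=
  s`_0 * t`_0 + s`_1 * t`_1 + s`_2 * t`_2 + s`_3 * t`_3 +
  s`_4 * t`_4 + s`_5 * t`_5 + s`_6 * t`_6 + s`_7 * t`_7.

Lemma sp_col8 (s t : seq R) : sp (col8 s) (col8 t) = dot8 s t.
Proof. by rewrite /sp bigop.unlock index_enum_ord8 /= !mxE /dot8; ring. Qed.

Lemma omega3_col8 (s : seq R) :
  omega3 (col8 s) = fun i j k => - dot8 (gamma_seq i (gamma_seq j (gamma_seq k s))) s.
Proof.
apply: functional_extensionality => i; apply: functional_extensionality => j.
apply: functional_extensionality => k.
by rewrite /omega3 -!mulmxA !gamma_col8 sp_col8.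
Qed.

(* Repeated indices give a literal 0 rather than [T a b c * 0], which keeps the
   expansions below small. *)
Lemma hodge3E (T : form3 R) : hodge3 T = fun i j k l => orient R *
  \sum_(a < 7) \sum_(b < 7 | (a < b)%N) \sum_(c < 7 | (b < c)%N)
    let s := [:: a; b; c; i; j; k; l] in
    if uniq s then (if odd (inversions (map val s)) then - T a b c else T a b c) else 0.
Proof.
apply: functional_extensionality => i; apply: functional_extensionality => j.
apply: functional_extensionality => k; apply: functional_extensionality => l.
congr (_ * _); apply: eq_bigr => a _; apply: eq_bigr => b _; apply: eq_bigr => c _.
rewrite /levi ninv_inversions -signr_odd /=.
by case: ifP => _; [case: odd; rewrite ?expr1 ?expr0 ?mulrN1 ?mulr1 | rewrite mulr0].
Qed.

Lemma clif1_col8 (X : vec7 R) (s : seq R) (r : 'I_8) :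
  (clif1 X *m col8 s) r 0 = \sum_(i < 7) X i * (gamma_seq i s)`_r.
Proof.
rewrite /clif1 mulmx_suml summxE; apply: eq_bigr => i _.
by rewrite -scalemxAl gamma_col8 !mxE.
Qed.

Lemma clif2_col8 (w : form2 R) (s : seq R) (r : 'I_8) : (clif2 w *m col8 s) r 0 =
  \sum_(i < 7) \sum_(j < 7 | (i < j)%N) w i j * (gamma_seq i (gamma_seq j s))`_r.
Proof.
rewrite /clif2 mulmx_suml summxE; apply: eq_bigr => i _.
rewrite mulmx_suml summxE; apply: eq_bigr => j _.
by rewrite -scalemxAl -!mulmxA !gamma_col8 !mxE.
Qed.

Lemma clif3_col8 (w : form3 R) (s : seq R) (r : 'I_8) : (clif3 w *m col8 s) r 0 =
  \sum_(i < 7) \sum_(j < 7 | (i < j)%N) \sum_(k < 7 | (j < k)%N)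
     w i j k * (gamma_seq i (gamma_seq j (gamma_seq k s)))`_r.
Proof.
rewrite /clif3 mulmx_suml summxE; apply: eq_bigr => i _.
rewrite mulmx_suml summxE; apply: eq_bigr => j _.
rewrite mulmx_suml summxE; apply: eq_bigr => k _.
by rewrite -scalemxAl -!mulmxA !gamma_col8 !mxE.
Qed.

Lemma clif5_col8 (w : form5 R) (s : seq R) (r : 'I_8) : (clif5 w *m col8 s) r 0 =
  \sum_(i < 7) \sum_(j < 7 | (i < j)%N) \sum_(k < 7 | (j < k)%N)
  \sum_(l < 7 | (k < l)%N) \sum_(m < 7 | (l < m)%N)
     w i j k l m *
       (gamma_seq i (gamma_seq j (gamma_seq k (gamma_seq l (gamma_seq m s)))))`_r.
Proof.
rewrite /clif5 mulmx_suml summxE; apply: eq_bigr => i _.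
rewrite mulmx_suml summxE; apply: eq_bigr => j _.
rewrite mulmx_suml summxE; apply: eq_bigr => k _.
rewrite mulmx_suml summxE; apply: eq_bigr => l _.
rewrite mulmx_suml summxE; apply: eq_bigr => m _.
by rewrite -scalemxAl -!mulmxA !gamma_col8 !mxE.
Qed.

Lemma sp_gamma (k : 'I_7) (Psi : spinor R) :
  sp (gamma R k *m Psi) (gamma R k *m Psi) = sp Psi Psi.
Proof.
have [s ->] := spinor_col8 Psi; rewrite gamma_col8 !sp_col8 /dot8.
by case: k => [[|[|[|[|[|[|[|//]]]]]]] Hk] /=; ring.
Qed.

Lemma clif1_delta (k : 'I_7) : clif1 (fun i => (i == k)%:R) = gamma R k.
Proof.
rewrite /clif1 (bigD1 k) //= eqxx scale1r big1 ?addr0 // => i /negbTE ->.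
exact: scale0r.
Qed.

Lemma sp0 (v : spinor R) : sp 0 v = 0.
Proof. by rewrite /sp big1 // => l _; rewrite mxE mul0r. Qed.

End Coordinates.

Section Identities.
Variables (R : realFieldType) (X : vec7 R) (Psi : spinor R).

Lemma clif2_ctr3_omega3 (a : R) :
  clif2 (ctr3 X (fun i j k => a * omega3 Psi i j k)) *m Psi =
  (3 * a * sp Psi Psi) *: (clif1 X *m Psi).
Proof.
have [s ->] := spinor_col8 Psi; apply/matrixP => r c.
rewrite [c]ord1 clif2_col8 mxE clif1_col8 sp_col8 /ctr3 omega3_col8 /dot8.
rewrite bigop.unlock index_enum_ord7 /=.
by case: r => [[|[|[|[|[|[|[|[|//]]]]]]]] Hr] /=; ring.
Qed.

Lemma clif3_ctr4_hodge_omega3 (f : R) :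
  clif3 (ctr4 X (fun i j k l => f * hodge3 (omega3 Psi) i j k l)) *m Psi =
  (4 * f * sp Psi Psi) *: (clif1 X *m Psi).
Proof.
have [s ->] := spinor_col8 Psi; apply/matrixP => r c.
rewrite [c]ord1 clif3_col8 mxE clif1_col8 sp_col8 /ctr4 hodge3E.
rewrite bigop.unlock index_enum_ord7.
(* Evaluating the Hodge star with omega3 folded keeps the term small. *)
set T := omega3 (col8 s); simpl.
rewrite /T omega3_col8 /dot8 /orient /=.
by case: r => [[|[|[|[|[|[|[|[|//]]]]]]]] Hr] /=; ring.
Qed.

Lemma clif5_wedge14_hodge_omega3 (f : R) :
  clif5 (wedge14 X (fun i j k l => f * hodge3 (omega3 Psi) i j k l)) *m Psi =
  (-3 * f * sp Psi Psi) *: (clif1 X *m Psi).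
Proof.
have [s ->] := spinor_col8 Psi; apply/matrixP => r c.
rewrite [c]ord1 clif5_col8 mxE clif1_col8 sp_col8 /wedge14 hodge3E.
rewrite bigop.unlock index_enum_ord7.
set T := omega3 (col8 s); simpl.
rewrite /T omega3_col8 /dot8 /orient /=.
by case: r => [[|[|[|[|[|[|[|[|//]]]]]]]] Hr] /=; ring.
Qed.

End Identities.

Section Admissibility.
Variables (R : realFieldType) (p q a f : R) (Psi : spinor R).

Lemma admissible_operator_omega3 (X : vec7 R) :
  (clif1 X + (1/4) *: clif2 (ctr3 X (fun i j k => a * omega3 Psi i j k))
     + p *: clif3 (ctr4 X (fun i j k l => f * hodge3 (omega3 Psi) i j k l))
     + q *: clif5 (wedge14 X (fun i j k l => f * hodge3 (omega3 Psi) i j k l))) *m Psi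
  = (1 + (3 / 4 * a + 4 * p * f - 3 * q * f) * sp Psi Psi) *: (clif1 X *m Psi).
Proof.
rewrite !mulmxDl -!scalemxAl clif2_ctr3_omega3 clif3_ctr4_hodge_omega3.
rewrite clif5_wedge14_hodge_omega3 !scalerA.
set v := clif1 X *m Psi; apply/matrixP => i j; rewrite !mxE; ring.
Qed.

Lemma admissible_omega3_iff : sp Psi Psi = 1 ->
  admissible p q Psi (fun i j k => a * omega3 Psi i j k)
                     (fun i j k l => f * hodge3 (omega3 Psi) i j k l)
  <-> 1 + (3 / 4 * a + 4 * p * f - 3 * q * f) = 0.
Proof.
move=> Psi1; split => [|c0 X]; last by rewrite admissible_operator_omega3 Psi1 mulr1 c0 scale0r.
move=> /(_ (fun i => (i == ord0)%:R)); rewrite admissible_operator_omega3 clif1_delta.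
rewrite Psi1 mulr1 => /eqP; rewrite scaler_eq0 => /orP[/eqP // | /eqP gPsi0].
by move: (sp_gamma ord0 Psi); rewrite gPsi0 sp0 Psi1 => /eqP; rewrite eq_sym oner_eq0.
Qed.

End Admissibility.

Theorem mainTheorem4 (R : realFieldType) (Psi : 'cV[R]_8) (p q : R) :
  sp Psi Psi = 1 ->
  (forall a f : R,
     admissible p q Psi (fun i j k => a * omega3 Psi i j k)
                        (fun i j k l => f * hodge3 (omega3 Psi) i j k l)
     <-> a = (12 * q - 16 * p) * f / 3 - 4 / 3)
  /\
  (4 * p - 3 * q = 0 -> forall a f : R,
     admissible p q Psi (fun i j k => a * omega3 Psi i j k)
                        (fun i j k l => f * hodge3 (omega3 Psi) i j k l)
     <-> a = - (4 / 3)).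
Proof.
move=> Psi1.
have family a f : admissible p q Psi (fun i j k => a * omega3 Psi i j k)
                       (fun i j k l => f * hodge3 (omega3 Psi) i j k l)
    <-> a = (12 * q - 16 * p) * f / 3 - 4 / 3.
  rewrite admissible_omega3_iff //.
  have -> : 1 + (3 / 4 * a + 4 * p * f - 3 * q * f) =
            3 / 4 * (a - ((12 * q - 16 * p) * f / 3 - 4 / 3)) by field.
  have n34 : (3 / 4 : R) != 0 by rewrite mulf_eq0 invr_eq0 !pnatr_eq0.
  split => [/eqP | ->]; last by rewrite subrr mulr0.
  by rewrite mulf_eq0 (negbTE n34) subr_eq0 => /eqP.
split => [// | pq0 a f]; rewrite family.
have -> : (12 * q - 16 * p) * f / 3 - 4 / 3 = - 4 * (4 * p - 3 * q) * f / 3 - 4 / 3 by ring.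
by rewrite pq0 mulr0 !mul0r sub0r.
Qed.
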